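(* Let $\mathcal{T}\subset\mathbb{R}$ be a compact interval of positive length $|\mathcal{T}|$, let $y_1,\dots,y_n$ and $g$ be continuous real functions on $\mathcal{T}$, and let $\alpha\in[1/(l+1),1)$. Define $k$, $\mathcal{H}_2$ and $M$ as in the context, and assume $M(t)>0$ for all $t\in\mathcal{T}$. Let $$\bar s^c(t):=\frac{M(t)}{\int_{\mathcal{T}}M(u)\,du},\qquad s^0(t):=\frac{1}{|\mathcal{T}|}.$$ Then $\mathcal{Q}(s^0)\ge\mathcal{Q}(\bar s^c)$. Moreover, $\mathcal{Q}(s^0)=\mathcal{Q}(\bar s^c)$ if and only if $M$ is constant almost everywhere on $\mathcal{T}$.
   Context: $\{1,\dots,n\}$ is partitioned into $\mathcal{I}_1$ with $|\mathcal{I}_1|=m\ge1$ and $\mathcal{I}_2$ with $|\mathcal{I}_2|=l\ge1$. Put $r:=\lceil (l+1)(1-\alpha)\rceil$. Let $k$ be the $r$-th smallest value of the multiset $\{\sup_{t\in\mathcal{T}}|y_h(t)-g(t)|:h\in\mathcal{I}_2\}$. Define $$\mathcal{H}_2:=\{j\in\mathcal{I}_2:\sup_{t\in\mathcal{T}}|y_j(t)-g(t)|\le k\},\qquad M(t):=\max_{j\in\mathcal{H}_2}|y_j(t)-g(t)|.$$ For a bounded function $u:\mathcal{T}\to(0,\infty)$, define the scores $R^u_h:=\sup_{t\in\mathcal{T}}|y_h(t)-g(t)|/u(t)$ for $h\in\mathcal{I}_2$. Let $k^u$ be the $r$-th smallest value of $\{R^u_h:h\in\mathcal{I}_2\}$.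 The size of the band is $\mathcal{Q}(u):=\int_{\mathcal{T}}2k^u u(t)\,dt$; this equals $2k^u$ when $\int_{\mathcal{T}}u=1$. *)

From HB Require Import structures.
From mathcomp Require Import all_boot all_order all_algebra.
From mathcomp Require Import all_classical all_reals all_analysis.
Set Implicit Arguments. Unset Strict Implicit. Unset Printing Implicit Defensive.
Import Order.TTheory GRing.Theory Num.Theory.
Import numFieldNormedType.Exports.
Local Open Scope classical_set_scope.
Local Open Scope ring_scope.

Section Defs.
Variable R : realType.

(* r-th smallest value (1-indexed) of a finite multiset given as a list *)
Definition kth_smallest (s : seq R) (r : nat) : R := nth 0 (sort <=%R s) r.-1.

Definition rank_r (l : nat) (alpha : R) : nat :=
  `|Num.ceil ((l%:R + 1) * (1 - alpha))|%N.

Variables (n : nat) (I2 : {set 'I_n}) (a b alpha : R)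
  (y : 'I_n -> R -> R) (g : R -> R).

Definition score (u : R -> R) (h : 'I_n) : R :=
  sup [set `|y h t - g t| / u t | t in `[a, b]%classic].

Definition score0 (h : 'I_n) : R :=
  sup [set `|y h t - g t| | t in `[a, b]%classic].

Definition k_u (u : R -> R) : R :=
  kth_smallest [seq score u h | h <- enum I2] (rank_r #|I2| alpha).

Definition k_0 : R :=
  kth_smallest [seq score0 h | h <- enum I2] (rank_r #|I2| alpha).

Definition H2 : {set 'I_n} := [set j in I2 | score0 j <= k_0].

(* M(t) = max_{j in H2} |y_j(t) - g(t)| (values are >= 0, H2 nonempty) *)
Definition Mfun (t : R) : R := \big[Num.max/0]_(j in H2) `|y j t - g t|.

Definition Qsize (u : R -> R) : R :=
  Rintegral (@lebesgue_measure R) `[a, b]%classic (fun t => 2 * k_u u * u t).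

Definition s0 (t : R) : R := 1 / (b - a).

Definition sbar_c (t : R) : R :=
  Mfun t / Rintegral (@lebesgue_measure R) `[a, b]%classic Mfun.

End Defs.

From HB Require Import structures.
From mathcomp Require Import all_boot all_order all_algebra.
From mathcomp Require Import all_classical all_reals all_analysis.
From mathcomp Require Import ring lra.
Import Order.TTheory GRing.Theory Num.Theory.
Import numFieldNormedType.Exports.
Local Open Scope classical_set_scope.
Local Open Scope ring_scope.

(* Write D = [a, b], M for the pointwise maximal deviation
   over the retained calibration curves H2, k0 for the r-th smallest sup-score
   and IM = \int_D M.
   - With the constant modulation s0 = 1/(b-a) all scores are scaled by b-a,
     so Q(s0) = 2 (b-a) k0.
   - With sbar = M / IM every retained curve h satisfies |y_h - g| <= M, hence
     its sbar-score is at most IM; at least r scores are retained, so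
     k^sbar <= IM and Q(sbar) = 2 k^sbar <= 2 IM <= 2 (b-a) k0 = Q(s0),
     the last step because M <= k0 on D.
   - Equality forces \int_D (k0 - M) = 0 with a non-negative continuous
     integrand, so M = k0 almost everywhere.  Conversely, if M is a.e.
     constant then, being continuous, it is constant on D, so sbar = s0 on D
     and both band sizes coincide. *)

Section OrderStatistics.
Context {R : realType}.
Implicit Types (s : seq R) (r : nat) (c : R).

Lemma kth_smallest_count s r : (0 < r)%N -> (r <= size s)%N ->
  (r <= count (fun x : R => (x <= kth_smallest s r)%R) s)%N.
Proof.
move=> r_gt0 r_le; rewrite /kth_smallest.
set t := sort <=%R s.
have t_sorted : sorted <=%R t by apply: sort_sorted => x y; exact: le_total.
have size_t : size t = size s by rewrite size_sort.
have -> : count (fun x : R => x <= nth 0 t r.-1) s = count (fun x : R => x <= nth 0 t r.-1) t.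
  by apply/esym/permP; rewrite perm_sort.
set v := nth 0 t r.-1.
rewrite -(cat_take_drop r t) count_cat.
rewrite (_ : count _ (take r t) = size (take r t)); last first.
  apply/eqP; rewrite -all_count; apply/(all_nthP 0) => i.
  rewrite size_takel ?size_t // => i_lt; rewrite nth_take //=.
  rewrite /v; apply: (le_sorted_leq_nth 0 t_sorted); rewrite ?inE ?size_t.
  - exact: leq_trans i_lt r_le.
  - by rewrite prednK // ltnS.
  - by rewrite -ltnS prednK.
by rewrite size_takel ?size_t // leq_addr.
Qed.

Lemma kth_smallest_le s r c : (0 < r)%N -> (r <= size s)%N ->
  (r <= count (fun x : R => (x <= c)%R) s)%N -> kth_smallest s r <= c.
Proof.
move=> r_gt0 r_le r_count; rewrite /kth_smallest.
set t := sort <=%R s.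
have t_sorted : sorted <=%R t by apply: sort_sorted => x y; exact: le_total.
have size_t : size t = size s by rewrite size_sort.
rewrite leNgt; apply/negP => c_lt.
have : (count (fun x : R => (x <= c)%R) t <= r.-1)%N.
  rewrite -(cat_take_drop r.-1 t) count_cat.
  have -> : count (fun x : R => x <= c) (drop r.-1 t) = 0%N.
    apply/eqP; rewrite -leqn0 leqNgt -has_count; apply/hasPn => x.
    move=> /(nthP 0) [i]; rewrite size_drop => i_lt <-.
    rewrite nth_drop -ltNge; apply: (lt_le_trans c_lt).
    apply: le_sorted_leq_nth => //; rewrite ?inE.
    - by rewrite size_t -ltnS prednK.
    - by rewrite -ltn_subRL.
    - by rewrite leq_addr.
  by rewrite addn0 (leq_trans (count_size _ _)) // size_take; case: ifP => // /negbT; rewrite -leqNgt.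
have -> : count (fun x : R => x <= c) t = count (fun x : R => x <= c) s.
  by apply/permP; rewrite perm_sort.
by move=> /(leq_trans r_count); rewrite -ltnS prednK // ltnn.
Qed.

Lemma kth_smallest_mem s r : (0 < r)%N -> (r <= size s)%N -> kth_smallest s r \in s.
Proof.
move=> r_gt0 r_le; rewrite /kth_smallest -(mem_sort <=%R); apply: mem_nth.
by rewrite size_sort -ltnS prednK.
Qed.

Lemma kth_smallest_scale s r c : 0 < c -> (0 < r)%N -> (r <= size s)%N ->
  kth_smallest [seq c * x | x <- s] r = c * kth_smallest s r.
Proof.
move=> c_gt0 r_gt0 r_le; rewrite /kth_smallest.
have mono : {mono (fun x => c * x) : x y / x <= y >-> x <= y}.
  by move=> x y /=; rewrite ler_pM2l.
rewrite -(map_sort mono) (nth_map 0) // size_sort.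
by rewrite -ltnS prednK // ltnS.
Qed.

End OrderStatistics.

Lemma rank_r_bounds {R : realType} {l : nat} {alpha : R} : (0 < l)%N ->
  1 / (l%:R + 1) <= alpha -> alpha < 1 ->
  (0 < rank_r l alpha)%N /\ (rank_r l alpha <= l)%N.
Proof.
move=> l_gt0 alpha_ge alpha_lt1; rewrite /rank_r.
have l1_gt0 : 0 < l%:R + 1 :> R by rewrite ltr_wpDl.
have l_alpha : 1 <= (l%:R + 1) * alpha.
  by move: alpha_ge; rewrite ler_pdivrMr // mulrC.
have x_gt0 : 0 < (l%:R + 1) * (1 - alpha) by rewrite mulr_gt0 // subr_gt0.
have x_le : (l%:R + 1) * (1 - alpha) <= l%:R by lra.
have ceil_ge_x := ceil_ge ((l%:R + 1) * (1 - alpha)).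
have ceil_le_l : Num.ceil ((l%:R + 1) * (1 - alpha)) <= l%:Z by rewrite ceil_le_int.
move: ceil_ge_x ceil_le_l; case: (Num.ceil _) => m.
  move=> m_ge m_le; split; last by rewrite /= -lez_nat.
  rewrite /= lt0n; apply/eqP => m0; move: m_ge; rewrite m0 /= => m_ge; lra.
by move=> m_ge; have := lt_le_trans x_gt0 m_ge; rewrite ltr0z.
Qed.

Section RealAnalysis.
Context {R : realType}.
Local Notation mu := (@lebesgue_measure R).

Lemma sup_image_scale (T : Type) (D : set T) (f1 f2 : T -> R) (c : R) :
  0 < c -> D !=set0 -> has_ubound (f1 @` D) ->
  (forall t, D t -> f2 t = c * f1 t) -> sup (f2 @` D) = c * sup (f1 @` D).
Proof.
move=> c_gt0 [t0 Dt0] [B B_ub] f2E.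
have sup1_ub : ubound (f1 @` D) (sup (f1 @` D)) by apply: ub_le_sup; exists B.
have f2_bounded : has_ubound (f2 @` D).
  exists (c * B) => _ [t Dt <-]; rewrite f2E // ler_pM2l //; apply: B_ub; by exists t.
have sup2_ub : ubound (f2 @` D) (sup (f2 @` D)) by apply: ub_le_sup.
apply/le_anti/andP; split.
- apply: ge_sup; first by exists (f2 t0), t0.
  move=> _ [t Dt <-]; rewrite f2E // ler_pM2l //; apply: sup1_ub; by exists t.
- rewrite -ler_pdivlMl //; apply: ge_sup; first by exists (f1 t0), t0.
  move=> _ [t Dt <-]; rewrite ler_pdivlMl // -f2E //; apply: sup2_ub; by exists t.
Qed.

(* A property holding almost everywhere cannot fail on a whole
   non-degenerate interval, which has positive Lebesgue measure. *)
Lemma ae_itv_contra {c d : R} {P : R -> Prop} : c < d ->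
  {ae mu, forall t, P t} -> (forall t, t \in `[c, d] -> ~ P t) -> False.
Proof.
move=> cd [N [mN N0 notP_N]] notP.
have : (mu `[c, d]%classic <= mu N)%E.
  by apply: le_measure; rewrite ?inE // => t /notP tP; apply: notP_N.
by rewrite N0 lebesgue_measure_itv /= lte_fin cd lee_fin subr_le0 leNgt cd.
Qed.

(* A continuous function that is a.e. equal to c on [a, b] equals c there:
   otherwise it would differ from c on a whole subinterval. *)
Lemma continuous_ae_cst {a b c : R} {f : R -> R} : a < b ->
  {within `[a, b]%classic, continuous f} ->
  {ae mu, forall t, `[a, b]%classic t -> f t = c} ->
  forall t, `[a, b]%classic t -> f t = c.
Proof.
move=> ab f_cont f_ae t0 Dt0; apply/eqP/negPn/negP => ft0_neq.
have e_gt0 : 0 < `|f t0 - c| by rewrite normr_gt0 subr_eq0.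
move/subspace_continuousP: f_cont => /(_ t0 Dt0) /cvgrPdist_lt /(_ _ e_gt0).
rewrite near_withinE => /nbhs_ballP [del /= del_gt0 near_t0].
have := Dt0; rewrite /= in_itv /= => /andP [a_le b_ge].
have del2_gt0 : 0 < del / 2 by rewrite divr_gt0.
apply: (@ae_itv_contra (Num.max a (t0 - del/2)) (Num.min b (t0 + del/2)) _ _ f_ae).
  rewrite lt_min !gt_max; apply/andP; split; apply/andP; split; lra.
move=> t; rewrite in_itv /= ge_max le_min => /andP [/andP [a_t t_l] /andP [t_b t_u]] ft.
have Dt : `[a, b]%classic t by rewrite /= in_itv /= a_t t_b.
have : ball t0 del t by rewrite /ball /= ltr_norml; apply/andP; split; lra.
by move=> /near_t0 /(_ Dt); rewrite /from_subspace /= ft // ltxx.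
Qed.

Lemma Rintegral_eq0_ae {d : measure_display} {T : measurableType d}
    {nu : {measure set T -> \bar R}} {D : set T} {f : T -> R} :
  measurable D -> nu.-integrable D (EFin \o f) ->
  (forall t, D t -> 0 <= f t) -> Rintegral nu D f = 0 ->
  {ae nu, forall t, D t -> f t = 0}.
Proof.
move=> mD f_int f_ge0 f_int0.
have /integrableP [f_meas _] := f_int.
have f_fin := integrable_fin_num mD f_int.
have abs_int0 : (\int[nu]_(x in D) `|(EFin \o f) x|)%E = 0.
  transitivity (\int[nu]_(x in D) (EFin \o f) x)%E.
    by apply: eq_integral => x; rewrite inE => Dx; rewrite gee0_abs // lee_fin f_ge0.
  by move: f_int0; rewrite /Rintegral => f_int0; rewrite -(fineK f_fin) f_int0.
have := (ae_eq_integral_abs _ mD f_meas).1 abs_int0.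
by apply: filterS => t ft0 Dt; have /(congr1 fine) := ft0 Dt.
Qed.

End RealAnalysis.

Lemma within_continuous_bigmax (R : realType) (T : topologicalType) (D : set T)
    (I : Type) (s : seq I) (P : pred I) (f : I -> T -> R) :
  (forall i, {within D, continuous (f i)}) ->
  {within D, continuous (fun t => \big[Num.max/0]_(i <- s | P i) f i t)}.
Proof.
move=> f_cont; elim: s => [|j s IH].
  rewrite (_ : (fun t => _) = cst 0); last by apply/funext => t; rewrite big_nil.
  by move=> x; apply: cvg_cst.
case Pj : (P j).
  rewrite (_ : (fun t => _) = (f j \max (fun t => \big[Num.max/0]_(i <- s | P i) f i t))).
    by move=> x; apply: continuous_max; [exact: f_cont | exact: IH].
  by apply/funext => t; rewrite big_cons Pj.
by rewrite (_ : (fun t => _) = (fun t => \big[Num.max/0]_(i <- s | P i) f i t)) //;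
  apply/funext => t; rewrite big_cons Pj.
Qed.

Section BandSize.
Context {R : realType} {n : nat} {I2 : {set 'I_n}} {a b alpha : R}
  {y : 'I_n -> R -> R} {g : R -> R}.
Hypothesis ab : a < b.
Hypothesis y_cont : forall i, {within `[a, b]%classic, continuous (y i)}.
Hypothesis g_cont : {within `[a, b]%classic, continuous g}.
Hypothesis r_gt0 : (0 < rank_r #|I2| alpha)%N.
Hypothesis r_le : (rank_r #|I2| alpha <= #|I2|)%N.
Hypothesis M_gt0 : forall t, t \in `[a, b] -> 0 < Mfun I2 a b alpha y g t.

Local Notation D := (`[a, b]%classic : set R).
Local Notation mu := (@lebesgue_measure R).
Local Notation M := (Mfun I2 a b alpha y g).
Local Notation k0 := (k_0 I2 a b alpha y g).
Local Notation kq := (k_u I2 a b alpha y g).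
Local Notation Q := (Qsize I2 a b alpha y g).
Local Notation sbar := (sbar_c I2 a b alpha y g).
Local Notation IM := (Rintegral mu D M).

Let dev (h : 'I_n) (t : R) : R := `|y h t - g t|.

Let D_a : D a. Proof. by rewrite /= in_itv /= lexx ltW. Qed.
Let measurable_D : measurable D. Proof. exact: measurable_itv. Qed.
Let length_gt0 : 0 < b - a. Proof. by rewrite subr_gt0. Qed.
Let mu_D : fine (mu D) = b - a.
Proof. by rewrite lebesgue_measure_itv /= lte_fin ab. Qed.
Let continuous_integrable {f : R -> R} :
  {within D, continuous f} -> mu.-integrable D (EFin \o f).
Proof. by apply: continuous_compact_integrable; exact: segment_compact. Qed.
Let cst_continuous (c : R) : {within D, continuous (cst c)}.
Proof. by move=> x; apply: cvg_cst. Qed.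

Lemma dev_continuous h : {within D, continuous (dev h)}.
Proof.
apply: (@within_continuous_comp _ _ _ D (y h - g) Num.norm).
  by move=> x _; exact: norm_continuous.
exact: within_continuousB.
Qed.

(* By the extreme value theorem each deviation is bounded on D. *)
Lemma dev_bounded h : has_ubound (dev h @` D).
Proof.
have [c _ c_max] := EVT_max (ltW ab) (dev_continuous h).
by exists (dev h c) => _ [t Dt <-]; apply: c_max.
Qed.

Lemma dev_le_score0 h t : D t -> dev h t <= score0 a b y g h.
Proof. by move=> Dt; apply: (ub_le_sup (dev_bounded h)); exists t. Qed.

Lemma score0_ge0 h : 0 <= score0 a b y g h.
Proof. exact: le_trans (normr_ge0 (y h a - g a)) (dev_le_score0 h a D_a). Qed.

(* k0 is one of the sup-scores, hence non-negative. *)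
Lemma k0_ge0 : 0 <= k0.
Proof.
have : k0 \in [seq score0 a b y g h | h <- enum I2].
  by apply: kth_smallest_mem => //; rewrite size_map -cardE.
by move=> /mapP [h _ ->]; exact: score0_ge0.
Qed.

Lemma dev_le_M h t : h \in H2 I2 a b alpha y g -> dev h t <= M t.
Proof. by move=> hH; exact: (le_bigmax_cond _ _ hH). Qed.

(* Every retained curve has sup-score at most k0, hence M <= k0 on D. *)
Lemma M_le_k0 t : D t -> M t <= k0.
Proof.
move=> Dt; apply: bigmax_le; first exact: k0_ge0.
move=> j; rewrite inE => /andP [_ j_le].
exact: le_trans (dev_le_score0 j t Dt) j_le.
Qed.

Lemma M_continuous : {within D, continuous M}.
Proof. exact: within_continuous_bigmax dev_continuous. Qed.

Lemma M_integrable : mu.-integrable D (EFin \o M).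
Proof. exact: continuous_integrable M_continuous. Qed.
Local Hint Resolve M_integrable : core.

(* Integrating M <= k0 over D. *)
Lemma int_M_le : IM <= (b - a) * k0.
Proof.
have -> : (b - a) * k0 = Rintegral mu D (cst k0).
  by rewrite Rintegral_cst // mu_D mulrC.
apply: le_Rintegral => //; first exact: continuous_integrable (cst_continuous k0).
exact: M_le_k0.
Qed.

Lemma int_M_gt0 : 0 < IM.
Proof.
have M_ge0 t : D t -> 0 <= M t by move=> Dt; exact/ltW/M_gt0.
rewrite lt0r Rintegral_ge0 // andbT; apply/eqP => IM0.
have M_ae0 := Rintegral_eq0_ae (nu := mu) measurable_D M_integrable M_ge0 IM0.
apply: (ae_itv_contra ab M_ae0) => t Dt Mt0.
by have := M_gt0 t Dt; rewrite Mt0 // ltxx.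
Qed.

Lemma score_s0 h : score a b y g (s0 a b) h = (b - a) * score0 a b y g h.
Proof.
apply: sup_image_scale => //; [by exists a | exact: (dev_bounded h) |].
by move=> t _; rewrite /s0 div1r invrK mulrC.
Qed.

Lemma Qsize_s0 : Q (s0 a b) = 2 * (b - a) * k0.
Proof.
have k_s0 : kq (s0 a b) = (b - a) * k0.
  rewrite /k_u (eq_map score_s0) (map_comp (fun x => (b - a) * x)).
  by rewrite kth_smallest_scale // size_map -cardE.
rewrite /Qsize k_s0 /s0 Rintegral_cst // mu_D; field; exact: lt0r_neq0.
Qed.

(* Since sbar has unit integral, the band size under sbar is 2 k^sbar. *)
Lemma Qsize_sbar : Q sbar = 2 * kq sbar.
Proof.
rewrite /Qsize; transitivity (Rintegral mu D (fun t => 2 * kq sbar / IM * M t)).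
  by apply: eq_Rintegral => t _; rewrite /sbar_c mulrA mulrAC.
by rewrite RintegralZl // -mulrA mulVf ?mulr1 // gt_eqF // int_M_gt0.
Qed.

(* Each retained curve has sbar-score at most IM, and at least r curves
   are retained, so the r-th smallest sbar-score is at most IM. *)
Lemma k_sbar_le : kq sbar <= IM.
Proof.
pose L0 := [seq score0 a b y g h | h <- enum I2].
have r_le_L0 : (rank_r #|I2| alpha <= size L0)%N by rewrite size_map -cardE.
apply: kth_smallest_le => //; first by rewrite size_map -cardE.
apply: leq_trans (kth_smallest_count L0 _ r_gt0 r_le_L0) _.
rewrite !count_map (@eq_in_count _ _ (fun h => (h \in I2) && (score0 a b y g h <= k0)));
  last by move=> h; rewrite mem_enum => ->.
apply: sub_count => h /andP [hI h_le] /=.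
have hH : h \in H2 I2 a b alpha y g by rewrite inE hI.
apply: ge_sup; first by exists (dev h a / sbar a), a.
move=> _ [t Dt <-]; have Mt_gt0 := M_gt0 t Dt.
rewrite /sbar_c invf_div mulrA ler_pdivrMr // mulrC.
by rewrite ler_wpM2l ?(ltW int_M_gt0) // dev_le_M.
Qed.

Lemma Qsize_sbar_le : Q sbar <= Q (s0 a b).
Proof.
rewrite Qsize_sbar Qsize_s0 -mulrA ler_pM2l //.
exact: le_trans k_sbar_le int_M_le.
Qed.

(* Equal band sizes force IM = (b - a) k0, i.e. \int_D (k0 - M) = 0 with a
   non-negative integrand, so M = k0 almost everywhere on D. *)
Lemma Qsize_eq_ae_cst : Q (s0 a b) = Q sbar -> {ae mu, forall t, D t -> M t = k0}.
Proof.
rewrite Qsize_sbar Qsize_s0 -mulrA => Q_eq.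
have k_eq : (b - a) * k0 = kq sbar by apply: (mulfI (x := 2)).
have IM_eq : IM = (b - a) * k0.
  by apply/le_anti; rewrite int_M_le k_eq k_sbar_le.
have gap_ge0 t : D t -> 0 <= k0 - M t by move=> Dt; rewrite subr_ge0 M_le_k0.
have gap_int : mu.-integrable D (EFin \o (fun t => k0 - M t)).
  apply: continuous_integrable; apply: within_continuousB;
    [exact: cst_continuous | exact: M_continuous].
have gap_int0 : Rintegral mu D (fun t => k0 - M t) = 0.
  have cst_int := continuous_integrable (cst_continuous k0).
  by rewrite (RintegralB (mu := mu) measurable_D cst_int M_integrable) Rintegral_cst // mu_D IM_eq; ring.
apply: filterS (Rintegral_eq0_ae (nu := mu) measurable_D gap_int gap_ge0 gap_int0).
by move=> t gap0 Dt; apply/esym/eqP; rewrite -subr_eq0 gap0.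
Qed.

(* If M is a.e. constant it is constant on D by continuity; then sbar = s0 on
   D, so the two modulations give the same scores and the same band. *)
Lemma ae_cst_Qsize_eq c : {ae mu, forall t, D t -> M t = c} -> Q (s0 a b) = Q sbar.
Proof.
move=> M_ae; have M_c := continuous_ae_cst ab M_continuous M_ae.
have c_gt0 : 0 < c by rewrite -(M_c a D_a); exact: M_gt0.
have IM_c : IM = c * (b - a).
  rewrite (eq_Rintegral _ (g := cst c)) ?Rintegral_cst ?mu_D //.
  by move=> t; rewrite inE => /M_c.
have sbar_s0 t : D t -> sbar t = s0 a b t.
  by move=> Dt; rewrite /sbar_c M_c // IM_c /s0; field; rewrite !lt0r_neq0.
have score_eq h : score a b y g sbar h = score a b y g (s0 a b) h.
  by rewrite /score; congr sup; apply: eq_imagel => t Dt; rewrite sbar_s0.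
have k_eq : kq sbar = kq (s0 a b) by rewrite /k_u (eq_map score_eq).
rewrite /Qsize k_eq; apply: eq_Rintegral => t; rewrite inE => Dt.
by rewrite sbar_s0.
Qed.

End BandSize.

Theorem theorem3 (R : realType) (n : nat) (I1 I2 : {set 'I_n})
  (a b alpha : R) (y : 'I_n -> R -> R) (g : R -> R) :
  (forall i : 'I_n, ~~ ((i \in I1) && (i \in I2))) -> (forall i : 'I_n, (i \in I1) || (i \in I2)) ->
  (0 < #|I1|)%N -> (0 < #|I2|)%N ->
  a < b ->
  (forall i, {within `[a, b]%classic, continuous (y i)}) ->
  {within `[a, b]%classic, continuous g} ->
  1 / (#|I2|%:R + 1) <= alpha -> alpha < 1 ->
  (forall t, t \in `[a, b] -> 0 < Mfun I2 a b alpha y g t) ->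
  Qsize I2 a b alpha y g (sbar_c I2 a b alpha y g) <= Qsize I2 a b alpha y g (s0 a b) /\
  (Qsize I2 a b alpha y g (s0 a b) = Qsize I2 a b alpha y g (sbar_c I2 a b alpha y g) <->
   exists c : R, {ae (@lebesgue_measure R),
     forall t, `[a, b]%classic t -> Mfun I2 a b alpha y g t = c}).
Proof.
move=> _ _ _ I2_gt0 ab y_cont g_cont alpha_ge alpha_lt1 M_gt0.
have [r_gt0 r_le] := rank_r_bounds I2_gt0 alpha_ge alpha_lt1.
split; first exact: Qsize_sbar_le.
split; first by move=> Q_eq; exists (k_0 I2 a b alpha y g); exact: Qsize_eq_ae_cst.
by move=> [c M_ae]; exact: ae_cst_Qsize_eq M_ae.
Qed.
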